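(* In an inverse problem, fix data $y_k$ and let $P_{k-1},Q_{k-1}\in\bar{\mathcal{P}}_k(\mathcal{X})\cap\mathcal{P}_1(\mathcal{X})$. Assume $$\frac{\mathbb{E}_{(X,X')\sim P_{k-1}\otimes Q_{k-1}}[d_{\mathcal{X}}(X,X')h(y_k,X)h(y_k,X')]}{\mathbb{E}_{X\sim P_{k-1}}[h(y_k,X)]\,\mathbb{E}_{X\sim Q_{k-1}}[h(y_k,X)]}\le\sup_{x_0\in\mathcal{X}}\Big|\mathbb{E}_{X\sim P_{k-1}}[d_{\mathcal{X}}(X,x_0)]-\mathbb{E}_{X\sim Q_{k-1}}[d_{\mathcal{X}}(X,x_0)]\Big|.$$ Then $P_k=F_k(P_{k-1})$ and $Q_k^*=F_k(Q_{k-1})$ satisfy $W_1(P_k,Q_k^* )\le W_1(P_{k-1},Q_{k-1})$.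
   Context: $(\mathcal{X},d_{\mathcal{X}})$ is a Polish metric space; the likelihood $x\mapsto h(y_k,x)\ge0$ is measurable. For a Borel probability measure $\mu$ on $\mathcal{X}$, $Z_k(\mu)=\int h(y_k,x)\mu(dx)$ and $F_k\mu(dx)=h(y_k,x)\mu(dx)/Z_k(\mu)$. $\bar{\mathcal{P}}_k(\mathcal{X})=\{\mu:0<Z_k(\mu)<\infty\}$; $\mathcal{P}_1(\mathcal{X})$ is the set of probability measures with finite first moment; $W_1$ is the 1-Wasserstein distance w.r.t. $d_{\mathcal{X}}$; $P\otimes Q$ denotes the product measure. *)

From HB Require Import structures.
From mathcomp Require Import all_boot all_order all_algebra.
From mathcomp Require Import all_classical all_reals all_analysis.
Set Implicit Arguments. Unset Strict Implicit. Unset Printing Implicit Defensive.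
Import Order.TTheory GRing.Theory Num.Theory.
Local Open Scope classical_set_scope.
Local Open Scope ring_scope.

Section Defs.
Context {d : measure_display} {X : measurableType d} {R : realType}.
Variable dist : X -> X -> R.

Definition is_metric : Prop :=
  [/\ forall x y, 0 <= dist x y,
      forall x y, dist x y = 0 <-> x = y,
      forall x y, dist x y = dist y x &
      forall x y z, dist x z <= dist x y + dist y z].

Definition dopen (A : set X) : Prop :=
  forall x, A x -> exists r : R, 0 < r /\ forall y, dist x y < r -> A y.

Definition is_borel_for_dist : Prop :=
  forall A : set X, measurable A <-> <<s dopen >> A.

Definition dseparable : Prop :=
  exists D : set X, countable D /\
    forall x (e : R), 0 < e -> exists y, D y /\ dist x y < e.

Definition dcomplete : Prop :=
  forall u : nat -> X,
    (forall e : R, 0 < e -> exists N, forall m n, (N <= m)%N -> (N <= n)%N ->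
        dist (u m) (u n) < e) ->
    exists l, forall e : R, 0 < e -> exists N, forall n, (N <= n)%N -> dist (u n) l < e.

Definition polish_metric : Prop :=
  [/\ is_metric, is_borel_for_dist, dseparable & dcomplete].

Local Open Scope ereal_scope.

Definition finite_first_moment (mu : probability X R) : Prop :=
  exists x0, \int[mu]_x (dist x x0)%:E < +oo.

(* normalising constant Z_k(mu) for the likelihood g = h(y_k, .) *)
Definition Zk (g : X -> R) (mu : probability X R) : \bar R :=
  \int[mu]_x (g x)%:E.

Definition in_barP (g : X -> R) (mu : probability X R) : Prop :=
  0 < Zk g mu < +oo.

Definition is_Fk (g : X -> R) (mu nu : probability X R) : Prop :=
  forall A, measurable A ->
    nu A = (\int[mu]_(x in A) (g x)%:E) * ((fine (Zk g mu))^-1)%:E.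

Definition is_coupling (P Q : probability X R) (pi : probability (X * X)%type R) : Prop :=
  (forall A, measurable A -> pi (fst @^-1` A) = P A) /\
  (forall A, measurable A -> pi (snd @^-1` A) = Q A).

Definition W1 (P Q : probability X R) : \bar R :=
  ereal_inf [set \int[pi]_z (dist z.1 z.2)%:E
            | pi in [set pi | is_coupling P Q pi]].

End Defs.

From HB Require Import structures.
From mathcomp Require Import all_boot all_order all_algebra.
From mathcomp Require Import all_classical all_reals all_analysis.
From mathcomp Require Import measurable_realfun lra.
Import Order.TTheory GRing.Theory Num.Theory.
Local Open Scope classical_set_scope.
Local Open Scope ring_scope.

(* The filtering step F_k reweights a measure by the density h(y_k,.)/Z_k, so
   the independent coupling P_k (x) Q_k* has transport cost exactly the
   left-hand side of the hypothesis; hence W_1(P_k, Q_k* ) is at most that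
   quantity. Conversely, x |-> d(x, x0) is 1-Lipschitz, so for every coupling
   of P_{k-1} and Q_{k-1} the triangle inequality bounds
   |E_P d(., x0) - E_Q d(., x0)| by its transport cost; hence the supremum in
   the hypothesis is at most W_1(P_{k-1}, Q_{k-1}). *)

Section integral_density.
Local Open Scope ereal_scope.
Context d (T : measurableType d) (R : realType).
Variables (mu : {sigma_finite_measure set T -> \bar R})
  (nu : {finite_measure set T -> \bar R}) (G : T -> R).
Hypotheses (mG : measurable_fun setT G)
  (nuE : forall A, measurable A -> nu A = \int[mu]_(x in A) (G x)%:E).

Lemma density_dominates : nu `<< mu.
Proof.
move=> A muA B mB BA; rewrite nuE//; apply: null_set_integral => //.
- exact/measurable_EFinP/measurable_funTS.
- exact: muA.
Qed.

Lemma ae_eq_Radon_Nikodym_density :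
  ae_eq mu setT (Radon_Nikodym_SigmaFinite.f nu mu) (EFin \o G).
Proof.
apply: integral_ae_eq => //.
- exact: Radon_Nikodym_SigmaFinite.f_integrable density_dominates.
- exact/measurable_EFinP.
- by move=> E _ mE; rewrite -Radon_Nikodym_SigmaFinite.f_integral ?nuE//;
    exact: density_dominates.
Qed.

Lemma integral_density (f : T -> \bar R) : (forall x, 0 <= f x) ->
  measurable_fun setT f -> \int[nu]_x f x = \int[mu]_x (f x * (G x)%:E).
Proof.
move=> f0 mf.
rewrite -(Radon_Nikodym_SigmaFinite.change_of_variables density_dominates)//.
apply: ae_eq_integral => //.
- apply: emeasurable_funM => //.
  exact: measurable_int (Radon_Nikodym_SigmaFinite.f_integrable density_dominates).
- exact/emeasurable_funM/measurable_EFinP.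
- exact/ae_eqe_mul2l/ae_eq_Radon_Nikodym_density.
Qed.

End integral_density.
Arguments integral_density {d T R mu nu G}.

Section integral_product_density.
Local Open Scope ereal_scope.
Context d1 d2 (T1 : measurableType d1) (T2 : measurableType d2) (R : realType).
Variables (mu1 : {sigma_finite_measure set T1 -> \bar R})
  (nu1 : {finite_measure set T1 -> \bar R}) (G1 : T1 -> R).
Variables (mu2 : {sigma_finite_measure set T2 -> \bar R})
  (nu2 : {finite_measure set T2 -> \bar R}) (G2 : T2 -> R).
Hypotheses (G1_ge0 : forall x, (0 <= G1 x)%R) (mG1 : measurable_fun setT G1)
  (nu1E : forall A, measurable A -> nu1 A = \int[mu1]_(x in A) (G1 x)%:E).
Hypotheses (G2_ge0 : forall y, (0 <= G2 y)%R) (mG2 : measurable_fun setT G2)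
  (nu2E : forall A, measurable A -> nu2 A = \int[mu2]_(y in A) (G2 y)%:E).

Lemma integral_product_density (F : T1 * T2 -> \bar R) :
  (forall z, 0 <= F z) -> measurable_fun setT F ->
  \int[nu1 \x nu2]_z F z = \int[mu1 \x mu2]_z (F z * (G1 z.1)%:E * (G2 z.2)%:E).
Proof.
move=> F0 mF.
have FG0 z : 0 <= F z * (G1 z.1)%:E * (G2 z.2)%:E by rewrite !mule_ge0 ?lee_fin.
have mFG : measurable_fun setT (fun z => F z * (G1 z.1)%:E * (G2 z.2)%:E).
  by apply/emeasurable_funM/measurable_EFinP/measurableT_comp => //;
    apply/emeasurable_funM/measurable_EFinP/measurableT_comp.
rewrite (fubini_tonelli1 _ mF F0) (fubini_tonelli1 _ mFG FG0).
rewrite (integral_density mG1 nu1E); last 2 first.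
- by move=> x; exact: integral_ge0.
- exact: measurable_fun_fubini_tonelli_F.
apply: eq_integral => x _; rewrite /fubini_F.
rewrite (integral_density mG2 nu2E)//; last exact: measurable_fun_pair2.
rewrite -ge0_integralZr//; last 3 first.
- by apply/emeasurable_funM/measurable_EFinP => //; exact: measurable_fun_pair2.
- by move=> y _; rewrite mule_ge0 ?lee_fin.
- by rewrite lee_fin.
by apply: eq_integral => y _ /=; rewrite muleAC.
Qed.

End integral_product_density.
Arguments integral_product_density {d1 d2 T1 T2 R mu1 nu1 G1 mu2 nu2 G2}.

Section Fk_density.
Local Open Scope ereal_scope.
Context d (T : measurableType d) (R : realType).
Variables (g : T -> R) (mu nu : probability T R).
Hypotheses (g_ge0 : forall x, (0 <= g x)%R) (mg : measurable_fun setT g).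

Lemma Zk_ge0 : 0 <= Zk g mu.
Proof. by apply: integral_ge0 => x _; rewrite lee_fin. Qed.

Lemma Fk_densityE : is_Fk g mu nu -> forall A, measurable A ->
  nu A = \int[mu]_(x in A) (g x * (fine (Zk g mu))^-1)%:E.
Proof.
move=> nuE A mA; rewrite nuE// -ge0_integralZr//.
- exact/measurable_EFinP/measurable_funTS.
- by move=> x _; rewrite lee_fin.
- by rewrite lee_fin invr_ge0 fine_ge0// Zk_ge0.
Qed.

End Fk_density.
Arguments Fk_densityE {d T R g mu nu}.

Section integral_product_Fk.
Local Open Scope ereal_scope.
Context d1 d2 (T1 : measurableType d1) (T2 : measurableType d2) (R : realType).
Variables (g1 : T1 -> R) (mu1 nu1 : probability T1 R).
Variables (g2 : T2 -> R) (mu2 nu2 : probability T2 R).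
Hypotheses (g1_ge0 : forall x, (0 <= g1 x)%R) (mg1 : measurable_fun setT g1).
Hypotheses (g2_ge0 : forall y, (0 <= g2 y)%R) (mg2 : measurable_fun setT g2).
Hypotheses (Fk1 : is_Fk g1 mu1 nu1) (Fk2 : is_Fk g2 mu2 nu2).
Hypotheses (Z1_fin : Zk g1 mu1 \is a fin_num) (Z2_fin : Zk g2 mu2 \is a fin_num).

Lemma integral_product_Fk (F : T1 * T2 -> \bar R) :
  (forall z, 0 <= F z) -> measurable_fun setT F ->
  \int[nu1 \x nu2]_z F z =
  \int[mu1 \x mu2]_z (F z * (g1 z.1)%:E * (g2 z.2)%:E)
    * ((fine (Zk g1 mu1 * Zk g2 mu2))^-1)%:E.
Proof.
move=> F0 mF.
set c1 := ((fine (Zk g1 mu1))^-1)%R; set c2 := ((fine (Zk g2 mu2))^-1)%R.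
have c1_ge0 : (0 <= c1)%R by rewrite invr_ge0 fine_ge0// Zk_ge0.
have c2_ge0 : (0 <= c2)%R by rewrite invr_ge0 fine_ge0// Zk_ge0.
have G1_ge0 x : (0 <= g1 x * c1)%R by rewrite mulr_ge0.
have G2_ge0 y : (0 <= g2 y * c2)%R by rewrite mulr_ge0.
have mG1 : measurable_fun setT (fun x => g1 x * c1)%R by exact: measurable_funM.
have mG2 : measurable_fun setT (fun y => g2 y * c2)%R by exact: measurable_funM.
rewrite (integral_product_density G1_ge0 mG1 (Fk_densityE g1_ge0 mg1 Fk1)
  G2_ge0 mG2 (Fk_densityE g2_ge0 mg2 Fk2))//.
rewrite fineM// invfM -ge0_integralZr//; first last.
- by rewrite lee_fin mulr_ge0.
- by move=> z _; rewrite !mule_ge0 ?lee_fin.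
- by apply/emeasurable_funM/measurable_EFinP/measurableT_comp => //;
    apply/emeasurable_funM/measurable_EFinP/measurableT_comp.
by apply: eq_integral => z _; rewrite !EFinM !muleA (muleAC _ c1%:E).
Qed.

End integral_product_Fk.
Arguments integral_product_Fk {d1 d2 T1 T2 R g1 mu1 nu1 g2 mu2 nu2}.

Section marginal_integral.
Local Open Scope ereal_scope.
Context d1 d2 (T1 : measurableType d1) (T2 : measurableType d2) (R : realType).
Variable pi : {measure set (T1 * T2) -> \bar R}.

Lemma integral_fst_marginal (P : {measure set T1 -> \bar R}) (f : T1 -> \bar R) :
  (forall A, measurable A -> pi (fst @^-1` A) = P A) ->
  (forall x, 0 <= f x) -> measurable_fun setT f ->
  \int[pi]_z f z.1 = \int[P]_x f x.
Proof.
move=> piP f0 mf; transitivity (\int[pushforward pi fst]_x f x).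
  by rewrite (ge0_integral_pushforward measurable_fst)// preimage_setT.
by apply: eq_measure_integral => A mA _; exact: piP.
Qed.

Lemma integral_snd_marginal (Q : {measure set T2 -> \bar R}) (f : T2 -> \bar R) :
  (forall A, measurable A -> pi (snd @^-1` A) = Q A) ->
  (forall y, 0 <= f y) -> measurable_fun setT f ->
  \int[pi]_z f z.2 = \int[Q]_y f y.
Proof.
move=> piQ f0 mf; transitivity (\int[pushforward pi snd]_y f y).
  by rewrite (ge0_integral_pushforward measurable_snd)// preimage_setT.
by apply: eq_measure_integral => A mA _; exact: piQ.
Qed.

End marginal_integral.
Arguments integral_fst_marginal {d1 d2 T1 T2 R pi P f}.
Arguments integral_snd_marginal {d1 d2 T1 T2 R pi Q f}.

Lemma product_is_coupling d (X : measurableType d) (R : realType)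
    (P Q : probability X R) :
  is_coupling P Q (P \x Q)%E.
Proof.
split=> A mA.
- rewrite -setXT; apply: eq_trans (product_measure1E P Q mA measurableT) _.
  by rewrite -[RHS]mule1; congr (_ * _)%E; exact: probability_setT.
- rewrite -setTX; apply: eq_trans (product_measure1E P Q measurableT mA) _.
  by rewrite -[RHS]mul1e; congr (_ * _)%E; exact: probability_setT.
Qed.

Lemma abse_sub_le (R : realDomainType) (a b c : \bar R) :
  a \is a fin_num -> b \is a fin_num ->
  (a <= b + c)%E -> (b <= a + c)%E -> (`|a - b| <= c)%E.
Proof.
move: a b c => [a| |] [b| |] [c| |]//= _ _; rewrite ?leey// !lee_fin => ab ba.
by rewrite ler_norml; apply/andP; split; lra.
Qed.

Section metric_first_moment.
Local Open Scope ereal_scope.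
Context d (X : measurableType d) (R : realType) (dist : X -> X -> R).
Hypotheses (dist_ge0 : forall x y, (0 <= dist x y)%R)
  (distC : forall x y, dist x y = dist y x)
  (dist_triangle : forall x y z, (dist x z <= dist x y + dist y z)%R)
  (mdist : measurable_fun setT (fun z : X * X => dist z.1 z.2)).

Let mdist_l y : measurable_fun setT (dist ^~ y).
Proof. exact: (measurable_fun_pair1 (f := fun z : X * X => dist z.1 z.2)). Qed.

(* discharges, through [//], the nonnegativity side conditions below *)
Let dist_fin_ge0 x y : 0 <= (dist x y)%:E.
Proof. by rewrite lee_fin. Qed.

Lemma first_moment_lty (P : probability X R) x0 :
  finite_first_moment dist P -> \int[P]_x (dist x x0)%:E < +oo.
Proof.
rewrite /finite_first_moment => -[x1 P_x1].
apply: (@le_lt_trans _ _ (\int[P]_x ((dist x x1)%:E + (dist x1 x0)%:E))).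
  apply: ge0_le_integral => //.
  - exact/measurable_EFinP.
  - by apply: emeasurable_funD; apply/measurable_EFinP.
  - by move=> x _; rewrite -EFinD lee_fin.
rewrite ge0_integralD//; last exact/measurable_EFinP.
by rewrite integral_cst// lte_add_pinfty// ltey_eq fin_numM// fin_num_measure.
Qed.

Lemma moment_diff_le_coupling (P Q : probability X R)
    (pi : probability (X * X)%type R) x0 :
  finite_first_moment dist P -> finite_first_moment dist Q ->
  is_coupling P Q pi ->
  `|\int[P]_x (dist x x0)%:E - \int[Q]_x (dist x x0)%:E|
    <= \int[pi]_z (dist z.1 z.2)%:E.
Proof.
move=> /(first_moment_lty _ x0) P_lty /(first_moment_lty _ x0) Q_lty [piP piQ].
have mdist_x0 : measurable_fun setT (fun x => (dist x x0)%:E).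
  exact/measurable_EFinP.
have mdist1 : measurable_fun setT (fun z : X * X => (dist z.1 x0)%:E).
  exact/measurable_EFinP/(measurableT_comp (mdist_l x0)).
have mdist2 : measurable_fun setT (fun z : X * X => (dist z.2 x0)%:E).
  exact/measurable_EFinP/(measurableT_comp (mdist_l x0)).
have mdist12 : measurable_fun setT (fun z : X * X => (dist z.1 z.2)%:E).
  exact/measurable_EFinP.
rewrite -(integral_fst_marginal piP _ mdist_x0)// in P_lty *.
rewrite -(integral_snd_marginal piQ _ mdist_x0)// in Q_lty *.
apply: abse_sub_le.
- by rewrite ge0_fin_numE// integral_ge0.
- by rewrite ge0_fin_numE// integral_ge0.
- rewrite -ge0_integralD//; apply: ge0_le_integral => //.
  + exact: emeasurable_funD.
  + by move=> z _; rewrite -EFinD lee_fin addrC.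
- rewrite -ge0_integralD//; apply: ge0_le_integral => //.
  + exact: emeasurable_funD.
  + by move=> z _; rewrite -EFinD lee_fin (distC z.1 z.2) addrC.
Qed.

Lemma moment_diff_sup_le_W1 (P Q : probability X R) :
  finite_first_moment dist P -> finite_first_moment dist Q ->
  ereal_sup [set `|\int[P]_x (dist x x0)%:E - \int[Q]_x (dist x x0)%:E|
            | x0 in [set: X]] <= W1 dist P Q.
Proof.
move=> P1 Q1; apply: ge_ereal_sup => _ [x0 _ <-].
apply/ereal_infP => _ [pi pi_coupling <-].
exact: moment_diff_le_coupling.
Qed.

End metric_first_moment.
Arguments moment_diff_sup_le_W1 {d X R dist}.

Lemma W1_le_product_integral {d} {X : measurableType d} {R : realType}
    (dist : X -> X -> R) (P Q : probability X R) :
  (W1 dist P Q <= \int[P \x Q]_z (dist z.1 z.2)%:E)%E.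
Proof.
by apply: ereal_inf_lbound; exists (P \x Q)%E => //; exact: product_is_coupling.
Qed.

Theorem theorem5 (R : realType) (d : measure_display) (X : measurableType d)
  (dist : X -> X -> R) (Y : Type) (h : Y -> X -> R) (yk : Y)
  (Pkm1 Qkm1 Pk Qk : probability X R) :
  polish_metric dist ->
  measurable_fun setT (fun z : X * X => dist z.1 z.2) ->
  (forall y x, 0 <= h y x) ->
  measurable_fun setT (h yk) ->
  in_barP (h yk) Pkm1 -> finite_first_moment dist Pkm1 ->
  in_barP (h yk) Qkm1 -> finite_first_moment dist Qkm1 ->
  (\int[(Pkm1 \x Qkm1)%E]_z (dist z.1 z.2 * h yk z.1 * h yk z.2)%:E
     * ((fine (Zk (h yk) Pkm1 * Zk (h yk) Qkm1))^-1)%:E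
   <= ereal_sup [set `| \int[Pkm1]_x (dist x x0)%:E - \int[Qkm1]_x (dist x x0)%:E |
                | x0 in [set: X]])%E ->
  is_Fk (h yk) Pkm1 Pk ->
  is_Fk (h yk) Qkm1 Qk ->
  (W1 dist Pk Qk <= W1 dist Pkm1 Qkm1)%E.
Proof.
move=> [[dist_ge0 _ distC dist_triangle] _ _ _] mdist h_ge0 mh.
move=> /andP[_ ZP_lty] P1 /andP[_ ZQ_lty] Q1 hyp FP FQ.
have ZP_fin : Zk (h yk) Pkm1 \is a fin_num by rewrite ge0_fin_numE ?Zk_ge0.
have ZQ_fin : Zk (h yk) Qkm1 \is a fin_num by rewrite ge0_fin_numE ?Zk_ge0.
apply: (le_trans (W1_le_product_integral dist Pk Qk)).
apply: (le_trans _
  (moment_diff_sup_le_W1 dist_ge0 distC dist_triangle mdist _ _ P1 Q1)).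
apply: (le_trans _ hyp).
(* what remains holds by conversion, as [(x * y)%:E] computes to [x%:E * y%:E] *)
rewrite (integral_product_Fk (h_ge0 yk) mh (h_ge0 yk) mh FP FQ ZP_fin ZQ_fin)//.
- by move=> z; rewrite lee_fin.
- exact/measurable_EFinP.
Qed.
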